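(* Let $T\le T'$ be positive integers, $f:\mathbb{R}^{T'}\to\mathbb{R}$ differentiable with $\mathrm{prog}(\nabla f(x))\le\mathrm{prog}(x)+1$ for all $x$, $0<\tau_1\le\dots\le\tau_n$, $p\in(0,1]$, $\mathcal{D}_i=\mathrm{Bernoulli}(p)$ and $O_i=O^G_{\tau_i}$ for all $i\in[n]$, where $$[G(x;\xi)]_j=\nabla_jf(x)\Big(1+\mathbb{1}[j>\mathrm{prog}(x)]\Big(\frac\xi p-1\Big)\Big),\quad x\in\mathbb{R}^{T'},\ \xi\in\{0,1\},\ j\in[T'],$$ and let $A$ be a zero-respecting algorithm run in the time multiple oracles protocol on $\mathbb{R}^{T'}$. Then for every $\delta\in(0,1]$ and every $t\ge0$ with $$t\le\frac1{24}\min_{m\in[n]}\left[\Big(\sum_{i=1}^m\frac1{\tau_i}\Big)^{-1}\Big(\frac1p+m\Big)\right]\Big(\frac T2+\log\delta\Big),$$ with probability at least $1-\delta$ we have $\mathrm{prog}(x^k)<T$ for all $k\in S_t$.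
   Context: $\mathrm{prog}(x)=\max\{i\ge0: x_i\ne0\}$ with the convention $x_0\equiv1$ (so $\mathrm{prog}(0)=0$). Time multiple oracles protocol. There are $n$ oracles $O_1,\dots,O_n$ with distributions $\mathcal{D}_1,\dots,\mathcal{D}_n$ on a sample space $\mathbb{S}_\xi$. An algorithm is a sequence $A=\{A^k\}_{k\ge0}$ with $A^0\in\mathbb{R}_{\ge0}\times[n]\times\mathbb{R}^d$ and $A^k:(\mathbb{R}^d)^k\to\mathbb{R}_{\ge0}\times[n]\times\mathbb{R}^d$ for $k\ge1$, such that for all $k\ge1$ and all $g^1,\dots,g^k$ the first (time) component of $A^k(g^1,\dots,g^k)$ is at least the first component of $A^{k-1}(g^1,\dots,g^{k-1})$. Each oracle $i$ has a state in $\mathbb{R}_{\ge0}\times\mathbb{R}^d\times\{0,1\}$, initially $s_i^0=(0,0,0)$. Set $t^0=0$. For $k=0,1,2,\dots$: $(t^{k+1},i^{k+1},x^k)=A^k(g^1,\dots,g^k)$ ($=A^0$ for $k=0$); draw $\xi^{k+1}\sim\mathcal{D}_{i^{k+1}}$ independently of everything before; $(s^{k+1}_{i^{k+1}},g^{k+1})=O_{i^{k+1}}(t^{k+1},x^k,s^k_{i^{k+1}},\xi^{k+1})$, and $s^{k+1}_j=s^k_j$ for $j\ne i^{k+1}$. For $t\ge0$, $S_t=\{k\in\mathbb{N}_0: t^k\le t\}$. Delayed oracle. For $\tau>0$ and a mapping $G:\mathbb{R}^d\times\mathbb{S}_\xi\to\mathbb{R}^d$, the oracle $O^G_\tau(t,x,(s_t,s_x,s_q),\xi)$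 returns $((t,x,1),0)$ if $s_q=0$; $((s_t,s_x,1),0)$ if $s_q=1$ and $t<s_t+\tau$; $((0,0,0),G(s_x;\xi))$ if $s_q=1$ and $t\ge s_t+\tau$. Zero-respecting: $\mathrm{supp}(x^k)\subseteq\bigcup_{j=1}^k\mathrm{supp}(g^j)$ for all $k\in\mathbb{N}_0$ and all realizations, where $\mathrm{supp}(x)=\{i:x_i\ne0\}$. *)

From HB Require Import structures.
From mathcomp Require Import all_boot all_order all_algebra.
From mathcomp Require Import all_classical all_reals.
From mathcomp Require Import topology normedtype derive exp.
Set Implicit Arguments. Unset Strict Implicit. Unset Printing Implicit Defensive.
Import Order.TTheory GRing.Theory Num.Theory numFieldNormedType.Exports.
Local Open Scope ring_scope.

Section Protocol.
Variable R : realType.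

(* Points of R^d are row vectors; coordinate j (1-based in the paper) is the
   ordinal j-1, i.e. x 0 j with j : 'I_d stands for x_{j+1}. *)
Local Notation vec d := 'rV[R]_d (only parsing).

(* prog(x) = max{ i >= 0 : x_i <> 0 }, with x_0 = 1 (so the max over an empty
   set of nonzero coordinates is 0). *)
Definition prog (d : nat) (x : vec d) : nat :=
  \max_(j < d | x 0 j != 0) j.+1.

Definition gradj (d : nat) (f : vec d -> R) (x : vec d) (j : 'I_d) : R :=
  ('D_(delta_mx 0 j : vec d) f) x.

Definition grad (d : nat) (f : vec d -> R) (x : vec d) : vec d :=
  \row_j gradj f x j.

Definition Gmap (d : nat) (f : vec d -> R) (p : R) (x : vec d) (xi : bool) : vec d :=
  \row_j (gradj f x j *
          (1 + (if (prog x < j.+1)%N then (xi%:R / p - 1) else 0))).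

Definition ostate (d : nat) : Type := (R * vec d * bool)%type.

Definition delayed_oracle (d : nat) (G : vec d -> bool -> vec d) (tau : R)
  (t : R) (x : vec d) (s : ostate d) (xi : bool) : ostate d * vec d :=
  let: (st, sx, sq) := s in
  if ~~ sq then ((t, x, true), 0)
  else if t < st + tau then ((st, sx, true), 0)
  else ((0, 0, false), G sx xi).

(* An algorithm: A^k maps the first k oracle answers (a sequence of length k)
   to (time, oracle index, query point). *)
Definition algorithm (n d : nat) : Type := seq (vec d) -> R * 'I_n * vec d.

Definition alg_valid (n d : nat) (A : algorithm n d) : Prop :=
  (forall gs, 0 <= (A gs).1.1) /\
  (forall gs g, (A gs).1.1 <= (A (rcons gs g)).1.1).

Section Run.
Variables (n d : nat) (A : algorithm n d) (O : 'I_n -> R -> vec d -> ostate d -> bool -> ostate d * vec d).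

(* xi k is the sample xi^{k+1}.  hist xi k = (oracle states s^k, [g^1;..;g^k]). *)
Fixpoint hist (xi : nat -> bool) (k : nat) : ('I_n -> ostate d) * seq (vec d) :=
  match k with
  | 0 => (fun _ => (0, 0, false), [::])
  | k'.+1 =>
    let: (s, gs) := hist xi k' in
    let: (t, i, x) := A gs in
    let: (si, g) := O i t x (s i) (xi k') in
    ((fun j => if j == i then si else s j), rcons gs g)
  end.

Definition query (xi : nat -> bool) (k : nat) : vec d := (A (hist xi k).2).2.

Definition qtime (xi : nat -> bool) (k : nat) : R :=
  match k with 0 => 0 | k'.+1 => (A (hist xi k').2).1.1 end.

Definition in_S (xi : nat -> bool) (t : R) (k : nat) : Prop := qtime xi k <= t.

Definition zero_resp_run (xi : nat -> bool) : Prop :=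
  forall k (j : 'I_d), query xi k 0 j != 0 ->
    exists2 g, g \in (hist xi k).2 & g 0 j != 0.
End Run.

Definition ext (K : nat) (b : {ffun 'I_K -> bool}) : nat -> bool :=
  fun k => match insub k with Some i => b i | None => false end.

(* Probability, under i.i.d. Bernoulli(p) samples, of an event depending on
   the first K samples only. *)
Definition probK (p : R) (K : nat) (E : (nat -> bool) -> Prop) : R :=
  \sum_(b : {ffun 'I_K -> bool})
     (\prod_(i < K) (if b i then p else 1 - p)) * (asbool (E (ext b)))%:R.

End Protocol.

(* Along a run let P be the largest progress of
   the gradients returned so far, capped at T, and r the time at which P last
   increased.  Only a completed computation started at a point of progress P can
   increase P, and it does so with probability p.  With c = tmin / 24,
   rho = 1 + (e - 1) / 23 and B the number of delays tau_j that still fit, for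
   each worker j, between the start of its current computation at progress P
   and the deadline r + c, the quantity
       exp (P - r / c) * (1 + (e - 1) p B) / rho ^ (P + 1)
   is a supermartingale.  A frontier completion before the deadline either
   increases P (probability p: a factor at most e, and the new B is at most
   1 / (23 p), absorbed by rho) or lowers B by one; after the deadline an
   increase of P is paid for by the decay of exp (- r / c).  The potential
   starts at most 1 and is at least exp (T - t / c) / rho ^ (T + 1) >= 1 / delta
   once progress T is reached by time t, so Markov's inequality concludes. *)

From HB Require Import structures.
From mathcomp Require Import all_boot all_order all_algebra.
From mathcomp Require Import all_classical all_reals.
From mathcomp Require Import topology normedtype derive exp.
From mathcomp Require Import sequences ring lra.
Import Order.TTheory GRing.Theory Num.Theory numFieldNormedType.Exports.
Local Open Scope ring_scope.
Set Implicit Arguments. Unset Strict Implicit. Unset Printing Implicit Defensive.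

Section Progress.
Variables (R : realType) (d : nat).
Implicit Types (x : 'rV[R]_d).

Lemma prog0 : prog (0 : 'rV[R]_d) = 0%N.
Proof. by rewrite /prog big_pred0 // => j; rewrite mxE eqxx. Qed.

Lemma prog_le x m : (forall j : 'I_d, x 0 j != 0 -> (j < m)%N) -> (prog x <= m)%N.
Proof. by move=> x_lt; apply/bigmax_leqP => j /x_lt. Qed.

Lemma ltn_prog x (j : 'I_d) : x 0 j != 0 -> (j < prog x)%N.
Proof. exact: (@leq_bigmax_cond _ (fun j => x 0 j != 0) (fun j : 'I_d => j.+1)). Qed.

Lemma prog_Gmap (f : 'rV[R]_d -> R) p x (b : bool) :
  (prog (grad f x) <= (prog x).+1)%N -> (prog (Gmap f p x b) <= prog x + b)%N.
Proof.
move=> grad_x; apply: prog_le => j; rewrite mxE mulf_eq0 negb_or => /andP[gj fac].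
have : (j < (prog x).+1)%N.
  by apply: leq_trans grad_x; apply: ltn_prog; rewrite mxE.
rewrite ltnS leq_eqVlt => /orP[/eqP Ej|]; last by move/leq_trans; apply; rewrite leq_addr.
move: fac; rewrite -Ej ltnSn; case: b => /=; first by rewrite addn1.
by rewrite mul0r sub0r subrr eqxx.
Qed.

Definition maxprog (gs : seq 'rV[R]_d) : nat := \max_(g <- gs) prog g.

Lemma maxprog_rcons gs g : maxprog (rcons gs g) = maxn (maxprog gs) (prog g).
Proof. by rewrite /maxprog -cats1 big_cat big_seq1. Qed.

End Progress.

Section BernoulliSamples.
Variables (R : realType) (p : R).

Definition bweight K (b : {ffun 'I_K -> bool}) : R :=
  \prod_(i < K) (if b i then p else 1 - p).

Definition expect K (F : (nat -> bool) -> R) : R :=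
  \sum_(b : {ffun 'I_K -> bool}) bweight b * F (ext b).

Definition upd (xi : nat -> bool) k (c : bool) : nat -> bool :=
  fun j => if j == k then c else xi j.

Definition ffun_snoc K (b : {ffun 'I_K -> bool}) (c : bool) : {ffun 'I_K.+1 -> bool} :=
  [ffun i => if unlift ord_max i is Some j then b j else c].

Lemma sum_bweight K : \sum_(b : {ffun 'I_K -> bool}) bweight b = 1.
Proof.
rewrite /bweight -(bigA_distr_bigA (fun (i : 'I_K) (c : bool) => if c then p else 1 - p)).
by apply: big1 => i _; rewrite big_bool /= addrC subrK.
Qed.

Lemma sum_ffun_snoc K (G : {ffun 'I_K.+1 -> bool} -> R) :
  \sum_b G b = \sum_(b : {ffun 'I_K -> bool}) \sum_(c : bool) G (ffun_snoc b c).
Proof.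
rewrite pair_big (reindex (fun q : {ffun 'I_K -> bool} * bool => ffun_snoc q.1 q.2)) //=.
apply: onW_bij.
exists (fun b : {ffun 'I_K.+1 -> bool} => ([ffun j => b (lift ord_max j)], b ord_max)).
  move=> [b c] /=; congr pair; last by rewrite ffunE unlift_none.
  by apply/ffunP => j; rewrite !ffunE liftK.
move=> b; apply/ffunP => i; rewrite ffunE.
by case: unliftP => [j ->|->]; rewrite ?ffunE.
Qed.

Lemma bweight_snoc K (b : {ffun 'I_K -> bool}) c :
  bweight (ffun_snoc b c) = bweight b * (if c then p else 1 - p).
Proof.
rewrite /bweight big_ord_recr /= ffunE unlift_none; congr (_ * _).
apply: eq_bigr => i _.
have -> : widen_ord (leqnSn K) i = lift ord_max i.
  by apply: val_inj; rewrite /= /bump leqNgt ltn_ord.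
by rewrite ffunE liftK.
Qed.

Lemma ext_lt K (b : {ffun 'I_K -> bool}) j (hj : (j < K)%N) : ext b j = b (Ordinal hj).
Proof.
by rewrite /ext; case: insubP => [i0 _ Ei0|]; [congr (b _); apply: val_inj | rewrite hj].
Qed.

Lemma ext_ge K (b : {ffun 'I_K -> bool}) j : (K <= j)%N -> ext b j = false.
Proof. by move=> hj; rewrite /ext insubF // ltnNge hj. Qed.

Lemma ext_snoc K (b : {ffun 'I_K -> bool}) c : ext (ffun_snoc b c) = upd (ext b) K c.
Proof.
apply: boolp.funext => j; rewrite /upd.
case: (ltngtP j K) => hj.
- rewrite (ext_lt _ (ltnW hj : (j < K.+1)%N)) (ext_lt _ hj) ffunE.
  have -> : Ordinal (ltnW hj : (j < K.+1)%N) = lift ord_max (Ordinal hj).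
    by apply: val_inj; rewrite /= /bump leqNgt hj.
  by rewrite liftK.
- by rewrite (ext_ge _ (ltnW hj)) (ext_ge _ hj).
- rewrite hj (ext_lt _ (ltnSn K)) ffunE.
  have -> : Ordinal (ltnSn K) = ord_max by apply: val_inj.
  by rewrite unlift_none.
Qed.

Lemma expectS K F : expect K.+1 F = \sum_(b : {ffun 'I_K -> bool})
   bweight b * (p * F (upd (ext b) K true) + (1 - p) * F (upd (ext b) K false)).
Proof.
rewrite /expect sum_ffun_snoc; apply: eq_bigr => b _.
by rewrite big_bool /= !bweight_snoc !ext_snoc; ring.
Qed.

Hypotheses (p_ge0 : 0 <= p) (p_le1 : p <= 1).

Lemma bweight_ge0 K (b : {ffun 'I_K -> bool}) : 0 <= bweight b.
Proof. by apply: prodr_ge0 => i _; case: ifP; rewrite ?subr_ge0. Qed.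

Lemma bweight_neq0_lt1 K (b : {ffun 'I_K -> bool}) (i : 'I_K) :
  bweight b != 0 -> b i = false -> p < 1.
Proof.
move=> b_neq0 bi; rewrite lt_neqAle p_le1 andbT; apply: contraNneq b_neq0 => p1.
by apply/prodf_eq0; exists i; rewrite // bi p1 subrr.
Qed.

Lemma expect_supermartingale (Z : (nat -> bool) -> nat -> R) :
  (forall xi, Z xi 0 <= 1) ->
  (forall K (b : {ffun 'I_K -> bool}), bweight b != 0 ->
     p * Z (upd (ext b) K true) K.+1 + (1 - p) * Z (upd (ext b) K false) K.+1
       <= Z (ext b) K) ->
  forall K, expect K (fun xi => Z xi K) <= 1.
Proof.
move=> Z0 Zstep; elim=> [|K IH].
  rewrite -(sum_bweight 0); apply: ler_sum => b _.
  by rewrite ler_piMr ?bweight_ge0.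
rewrite expectS; apply: le_trans IH; apply: ler_sum => b _.
have [->|b_neq0] := eqVneq (bweight b) 0; first by rewrite !mul0r.
by rewrite ler_wpM2l ?bweight_ge0 ?Zstep.
Qed.

Lemma probK_compl_le K (E : (nat -> bool) -> Prop) (Z : (nat -> bool) -> R) (th : R) :
  0 < th -> (forall xi, 0 <= Z xi) ->
  (forall b : {ffun 'I_K -> bool}, bweight b != 0 -> ~ E (ext b) -> th <= Z (ext b)) ->
  1 - probK p K E <= expect K Z / th.
Proof.
move=> th_gt0 Z_ge0 Zbad.
rewrite /probK /expect -{1}(sum_bweight K) -sumrB mulr_suml.
apply: ler_sum => b _; rewrite -[X in X - _]mulr1 -mulrBr -mulrA.
have [->|b_neq0] := eqVneq (bweight b) 0; first by rewrite !mul0r.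
rewrite ler_wpM2l ?bweight_ge0 //.
case: (pselect (E (ext b))) => Eb.
  by rewrite asboolT // subrr divr_ge0 ?Z_ge0 ?ltW.
by rewrite asboolF // subr0 ler_pdivlMr // mul1r Zbad.
Qed.

End BernoulliSamples.

Section History.
Variables (R : realType) (n d : nat) (A : algorithm R n d)
  (O : 'I_n -> R -> 'rV[R]_d -> ostate R d -> bool -> ostate R d * 'rV[R]_d).

Definition hist_step (s : 'I_n -> ostate R d) (gs : seq 'rV[R]_d) (b : bool) :=
  let a := A gs in let o := O a.1.2 a.1.1 a.2 (s a.1.2) b in
  ((fun j => if j == a.1.2 then o.1 else s j), rcons gs o.2).

Lemma histS xi k :
  hist A O xi k.+1 = hist_step (hist A O xi k).1 (hist A O xi k).2 (xi k).
Proof.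
rewrite /= /hist_step; case: (hist A O xi k) => s gs /=.
by case: (A gs) => [[t i] x] /=; case: (O i t x (s i) (xi k)).
Qed.

Lemma eq_hist xi xi' k :
  (forall j, (j < k)%N -> xi j = xi' j) -> hist A O xi k = hist A O xi' k.
Proof.
elim: k => [//|k IH] eq_xi; rewrite !histS IH ?eq_xi // => j /ltnW; exact: eq_xi.
Qed.

Lemma maxprog_histS xi k :
  (maxprog (hist A O xi k).2 <= maxprog (hist A O xi k.+1).2)%N.
Proof. by rewrite histS /hist_step /= maxprog_rcons leq_maxl. Qed.

Lemma zero_resp_prog xi k : zero_resp_run A O xi ->
  (prog (query A O xi k) <= maxprog (hist A O xi k).2)%N.
Proof.
move=> zr; apply: prog_le => j /zr[g g_in gj].
apply: leq_trans (ltn_prog gj) _.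
exact: (@leq_bigmax_seq _ _ xpredT (fun g => prog g) g g_in).
Qed.

Lemma qtime_le_next xi k : alg_valid A -> qtime A O xi k <= (A (hist A O xi k).2).1.1.
Proof.
case=> A_ge0 A_mono; case: k => [|k]; first exact: A_ge0.
by rewrite /qtime histS /hist_step /=; exact: A_mono.
Qed.

End History.

Section Potential.
Variables (R : realType) (n T d : nat) (hn : (0 < n)%N) (tau : 'I_n -> R) (p : R).
Hypotheses (tau_gt0 : forall i, 0 < tau i)
  (tau_mono : forall i j : 'I_n, (i <= j)%N -> tau i <= tau j)
  (p_gt0 : 0 < p) (p_le1 : p <= 1).
Implicit Types (s : 'I_n -> ostate R d) (L : nat) (r cur : R).

(* The ordinal [m] stands for the paper's [m + 1]. *)
Definition rate (m : 'I_n) : R := \sum_(i < n | (i <= m)%N) (tau i)^-1.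
Definition time_bound (m : 'I_n) : R := (rate m)^-1 * (p^-1 + m%:R + 1).
Definition tmin : R := \big[Num.min/ time_bound (Ordinal hn)]_(m < n) time_bound m.

(* The factor 24 yields [budget_sum_reset_le], which [rho] absorbs at every
   increase of progress; [rho ^+ T.+1 <= expR (T / 2)] is paid for by the term
   [T / 2] of the time bound. *)
Definition tscale : R := tmin / 24.
Definition u : R := expR 1 - 1.
Definition rho : R := 1 + u / 23.

Lemma rate_gt0 m : 0 < rate m.
Proof.
rewrite /rate (bigD1 m) //=; apply: (@lt_le_trans _ _ (tau m)^-1).
  by rewrite invr_gt0.
by rewrite lerDl sumr_ge0 // => i _; rewrite invr_ge0 ltW.
Qed.

Lemma time_bound_gt0 m : 0 < time_bound m.
Proof.
have ip : 0 < p^-1 by rewrite invr_gt0.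
by rewrite mulr_gt0 ?invr_gt0 ?rate_gt0 //; have := ler0n R m; lra.
Qed.

Lemma tmin_le m : tmin <= time_bound m.
Proof. exact: bigmin_le. Qed.

Lemma tscale_gt0 : 0 < tscale.
Proof.
have : 0 < tmin by apply: lt_bigmin => // *; exact: time_bound_gt0.
by rewrite /tscale; lra.
Qed.

Lemma u_ge0 : 0 <= u.
Proof. by rewrite /u; have := expR_ge1Dx (1 : R); lra. Qed.

Lemma u_le3 : u <= 3.
Proof.
set y := expR (1 / 2 : R).
have e_sq : expR (1 : R) = y * y by rewrite -expRD; congr expR; lra.
have y_gt0 : 0 < y by rewrite expR_gt0.
have half : y * (1 / 2) <= 1.
  rewrite -[leRHS](mulfV (lt0r_neq0 y_gt0)) ler_pM2l // /y -expRN.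
  by have := expR_ge1Dx (- (1 / 2) : R); lra.
have : y * y <= 2 * 2 by apply: ler_pM; lra.
by rewrite /u e_sq; lra.
Qed.

Lemma rho_ge1 : 1 <= rho.
Proof. by rewrite /rho; have := u_ge0; lra. Qed.

Lemma rho_gt0 : 0 < rho.
Proof. by have := rho_ge1; lra. Qed.

(* Delays of worker [j] that fit between [e] and the deadline [r + tscale]. *)
Definition budget (r e : R) (j : 'I_n) : R :=
  if e + tau j <= r + tscale then (r + tscale - e) / tau j else 0.

(* Workers that do not compute at a point of progress [L] count as starting now. *)
Definition start_time (s : 'I_n -> ostate R d) (L : nat) (cur : R) (j : 'I_n) : R :=
  if (s j).2 && (prog (s j).1.2 == L) then (s j).1.1 else cur.

Definition budget_sum s L r cur : R := \sum_j budget r (start_time s L cur j) j.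

Definition budget_term s L r cur : R := if (L < T)%N then p * budget_sum s L r cur else 0.

Definition zscale (L : nat) (r : R) : R := expR (L%:R - r / tscale) / rho ^+ L.+1.

Definition potential s L r cur : R := zscale L r * (1 + u * budget_term s L r cur).

Lemma budget_ge0 (r e : R) j : 0 <= budget r e j.
Proof.
rewrite /budget; case: ifP => // le_e; have := tau_gt0 j.
by move=> tau_j; rewrite divr_ge0 ?ltW //; lra.
Qed.

Lemma le_budget (r e e' : R) j : e <= e' -> budget r e' j <= budget r e j.
Proof.
move=> le_e; rewrite {1}/budget; case: ifP => fits'; last exact: budget_ge0.
rewrite /budget ifT; last by apply: le_trans fits'; rewrite lerD2r.
by apply: ler_wpM2r; [rewrite invr_ge0 ltW | lra].
Qed.

Lemma budget_complete (r st t' : R) j : st + tau j <= t' -> t' <= r + tscale ->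
  budget r t' j <= budget r st j - 1.
Proof.
move=> done_j early; have tau_j := tau_gt0 j.
rewrite [budget r st j]/budget ifT; last by lra.
have -> : (r + tscale - st) / tau j - 1 = (r + tscale - st - tau j) / tau j.
  by field; rewrite lt0r_neq0.
rewrite /budget; case: ifP => _; first by apply: ler_wpM2r; [rewrite invr_ge0 ltW | lra].
by apply: divr_ge0; [lra | exact: ltW].
Qed.

Lemma budget_late (r t' : R) j : r + tscale < t' -> budget r t' j = 0.
Proof.
by move=> late; rewrite /budget ifF //; apply/negbTE; have := tau_gt0 j; rewrite -ltNge; lra.
Qed.

Lemma budget_reset (r : R) j : budget r r j = if tau j <= tscale then tscale / tau j else 0.
Proof. by rewrite /budget lerD2l addrAC subrr add0r. Qed.

Lemma budget_sum_reset_le (r : R) : p * \sum_j budget r r j <= 23^-1.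
Proof.
under eq_bigr do rewrite budget_reset.
case: (pickP (fun j : 'I_n => tau j <= tscale)) => [j0 fast_j0|slow]; last first.
  by rewrite big1 ?mulr0 ?invr_ge0 ?ler0n // => j _; rewrite slow.
have [m fast_m fast_max] :=
  @arg_maxnP _ j0 (fun j : 'I_n => tau j <= tscale) (fun j : 'I_n => nat_of_ord j) fast_j0.
have fastE j : (tau j <= tscale) = (j <= m)%N.
  by apply/idP/idP => [/fast_max // | /tau_mono/le_trans]; apply.
rewrite -big_mkcond /= (eq_bigl (fun j : 'I_n => (j <= m)%N)) // -mulr_sumr -/(rate m).
(* The [m.+1] fast workers contribute at least [1] each, and [tmin <= time_bound m]. *)
have count : m.+1%:R <= tscale * rate m.
  have -> : m.+1%:R = \sum_(j < n | (j <= m)%N) (1 : R).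
    rewrite (eq_bigl (fun j : 'I_n => xpredT j && (j < m.+1)%N)) //.
    rewrite -(@big_ord_widen_cond _ 0 +%R m.+1 n xpredT (fun=> 1) (ltn_ord m)).
    by rewrite sumr_const card_ord.
  rewrite /rate mulr_sumr; apply: ler_sum => j; rewrite -fastE => fast_j.
  by rewrite ler_pdivlMr ?mul1r.
have tmin_rate : tmin * rate m <= p^-1 + m%:R + 1.
  have := ler_wpM2r (ltW (rate_gt0 m)) (tmin_le m).
  by rewrite /time_bound mulrAC mulVf ?mul1r ?lt0r_neq0 ?rate_gt0.
have p0 := p_gt0.
have tmin_scale : tmin * rate m = 24 * (tscale * rate m) by rewrite /tscale; field.
have pcount : p * m.+1%:R <= p * (tscale * rate m) by rewrite ler_pM2l.
have pbound : p * (tmin * rate m) <= p * (p^-1 + m%:R + 1) by rewrite ler_pM2l.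
rewrite mulrDr mulrDr mulfV ?lt0r_neq0 // -natr1 mulrDr mulr1 in pbound pcount.
by rewrite tmin_scale in pbound; lra.
Qed.

Lemma zscale_gt0 L (r : R) : 0 < zscale L r.
Proof. by rewrite divr_gt0 ?expR_gt0 ?exprn_gt0 ?rho_gt0. Qed.

Lemma rho_zscaleS L (r t' : R) :
  rho * zscale L.+1 t' = expR (1 - (t' - r) / tscale) * zscale L r.
Proof.
have tscale_neq0 := lt0r_neq0 tscale_gt0; have rho_neq0 := lt0r_neq0 rho_gt0.
rewrite /zscale; have -> : L.+1%:R - t' / tscale = (1 - (t' - r) / tscale) + (L%:R - r / tscale).
  by rewrite -natr1; field.
by rewrite expRD exprS; field; rewrite expf_neq0.
Qed.

Lemma budget_term_ge0 s L (r cur : R) : 0 <= budget_term s L r cur.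
Proof.
rewrite /budget_term; case: ifP => // _; apply: mulr_ge0; first exact: ltW.
by apply: sumr_ge0 => j _; exact: budget_ge0.
Qed.

Lemma potential_ge0 s L (r cur : R) : 0 <= potential s L r cur.
Proof.
apply: mulr_ge0; first exact: ltW (zscale_gt0 _ _).
by rewrite addr_ge0 ?ler01 // mulr_ge0 ?u_ge0 ?budget_term_ge0.
Qed.

Lemma budget_le_sum s L (r cur : R) i : budget r (start_time s L cur i) i <= budget_sum s L r cur.
Proof.
rewrite /budget_sum (bigD1 i) //= lerDl sumr_ge0 // => j _; exact: budget_ge0.
Qed.

Lemma budget_sum_update s s' L (r cur cur' delta : R) i :
  (forall j, j != i -> s' j = s j) -> cur <= cur' ->
  budget r (start_time s' L cur' i) i <= budget r (start_time s L cur i) i - delta ->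
  budget_sum s' L r cur' <= budget_sum s L r cur - delta.
Proof.
move=> s'E le_cur le_i; rewrite /budget_sum (bigD1 i) //= [X in _ <= X - _](bigD1 i) //=.
suff : \sum_(j | j != i) budget r (start_time s' L cur' j) j <=
       \sum_(j | j != i) budget r (start_time s L cur j) j by lra.
apply: ler_sum => j /s'E s'j; apply: le_budget.
by rewrite /start_time s'j; case: ifP.
Qed.

Lemma potential_reset s L (r : R) :
  (forall j, (s j).2 -> prog (s j).1.2 != L) -> potential s L r r <= rho * zscale L r.
Proof.
move=> idle; have start_r j : start_time s L r j = r.
  by rewrite /start_time; case: (boolP (s j).2) => //= /idle /negbTE ->.
rewrite mulrC /potential ler_pM2l ?zscale_gt0 // /rho /budget_term.
have u0 := u_ge0; case: ifP => _; last by rewrite mulr0; lra.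
have : p * budget_sum s L r r <= 23^-1.
  by rewrite /budget_sum; under eq_bigr do rewrite start_r; exact: budget_sum_reset_le.
by move=> /(ler_wpM2l u0); lra.
Qed.

Section OneStep.
Variable f : 'rV[R]_d -> R.
Hypothesis grad_prog : forall x, (prog (grad f x) <= (prog x).+1)%N.

Definition oracles (i : 'I_n) := delayed_oracle (Gmap f p) (tau i).

Definition potential_after (P : nat) (r t' : R) (s' : 'I_n -> ostate R d) (g : 'rV[R]_d) :=
  let P' := maxn P (prog g) in
  potential s' (minn P' T) (if (minn P T < minn P' T)%N then t' else r) t'.

Definition potential_next s P (r t' : R) i x b :=
  let o := oracles i t' x (s i) b in
  potential_after P r t' (fun j => if j == i then o.1 else s j) o.2.

Section Cases.
Variables (s : 'I_n -> ostate R d) (P : nat) (r cur t' : R) (i : 'I_n) (x : 'rV[R]_d).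
Hypotheses (pending_le : forall j, (s j).2 -> (prog (s j).1.2 <= P)%N)
  (r_le_cur : r <= cur) (cur_le_t' : cur <= t') (P_lt_T : (P < T)%N).

Local Notation B := (p * budget_sum s P r cur).

Lemma potential_after_stay s' g :
  (prog g <= P)%N -> potential_after P r t' s' g = potential s' P r t'.
Proof.
by move=> g_le; rewrite /potential_after (maxn_idPl g_le) (minn_idPl (ltnW P_lt_T)) ltnn.
Qed.

Lemma potential_after_advance s' g :
  prog g = P.+1 -> (forall j, (s' j).2 -> (prog (s' j).1.2 <= P)%N) ->
  potential_after P r t' s' g <= rho * zscale P.+1 t'.
Proof.
move=> g_adv pending'; rewrite /potential_after g_adv (maxn_idPr (leqnSn P)).
rewrite (minn_idPl P_lt_T) (minn_idPl (ltnW P_lt_T)) ltnSn.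
by apply: potential_reset => j /pending'; rewrite neq_ltn ltnS => ->.
Qed.

Lemma potential_update_le s' delta :
  (forall j, j != i -> s' j = s j) ->
  budget r (start_time s' P t' i) i <= budget r (start_time s P cur i) i - delta ->
  potential s' P r t' <= zscale P r * (1 + u * (B - p * delta)).
Proof.
move=> s'E le_i; rewrite /potential /budget_term P_lt_T ler_pM2l ?zscale_gt0 // lerD2l.
apply: ler_wpM2l; first exact: u_ge0.
rewrite -mulrBr ler_pM2l //.
exact: budget_sum_update s'E cur_le_t' le_i.
Qed.

Lemma potential_update_mono s' :
  (forall j, j != i -> s' j = s j) ->
  budget r (start_time s' P t' i) i <= budget r (start_time s P cur i) i ->
  potential s' P r t' <= potential s P r cur.
Proof.
move=> s'E le_i; have := @potential_update_le s' 0 s'E.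
by rewrite !subr0 mulr0 subr0 /potential /budget_term P_lt_T; apply.
Qed.

Lemma potential_next_idle b :
  ~~ (s i).2 -> potential_next s P r t' i x b <= potential s P r cur.
Proof.
case s_i : (s i) => [[st sx] []] //= _.
rewrite /potential_next /oracles /delayed_oracle s_i /= potential_after_stay ?prog0 //.
apply: potential_update_mono => [j /negbTE -> //|].
by apply: le_budget; rewrite /start_time eqxx s_i /=; case: ifP.
Qed.

Lemma potential_next_wait b :
  (s i).2 -> t' < (s i).1.1 + tau i ->
  potential_next s P r t' i x b <= potential s P r cur.
Proof.
case s_i : (s i) => [[st sx] []] //= _ wait.
rewrite /potential_next /oracles /delayed_oracle s_i /= wait potential_after_stay ?prog0 //.
apply: potential_update_mono => [j /negbTE -> //|].
by apply: le_budget; rewrite /start_time eqxx s_i /=; case: ifP.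
Qed.

Section Completion.
Hypotheses (busy_i : (s i).2) (done_i : (s i).1.1 + tau i <= t').

Local Notation sx := (s i).1.2.
Local Notation s_done := (fun j => if j == i then (0 : R, 0 : 'rV[R]_d, false) else s j).

Lemma potential_next_done b :
  potential_next s P r t' i x b = potential_after P r t' s_done (Gmap f p sx b).
Proof.
rewrite /potential_next /oracles /delayed_oracle.
by case: (s i) busy_i done_i => [[st sx'] []] //= _ done; rewrite ltNge done.
Qed.

Lemma s_done_pending j : (s_done j).2 -> (prog (s_done j).1.2 <= P)%N.
Proof. by rewrite /=; case: ifP => // _; exact: pending_le. Qed.

Lemma start_time_done : start_time s_done P t' i = t'.
Proof. by rewrite /start_time eqxx. Qed.

Lemma prog_sx_le : (prog sx <= P)%N.
Proof. exact: pending_le. Qed.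

Lemma prog_Gmap_advance b :
  prog sx = P -> (P < prog (Gmap f p sx b))%N -> prog (Gmap f p sx b) = P.+1.
Proof.
move=> sxP g_gt; apply/eqP; rewrite eqn_leq g_gt andbT.
apply: leq_trans (prog_Gmap p b (grad_prog sx)) _.
by rewrite sxP -addn1 leq_add2l leq_b1.
Qed.

Lemma potential_next_behind b :
  prog sx != P -> potential_next s P r t' i x b <= potential s P r cur.
Proof.
move=> sx_ne; have sx_lt : (prog sx < P)%N by rewrite ltn_neqAle sx_ne prog_sx_le.
rewrite potential_next_done potential_after_stay; last first.
  apply: leq_trans (prog_Gmap p b (grad_prog sx)) _.
  by apply: leq_trans (leq_add (leqnn _) (leq_b1 b)) _; rewrite addn1.
apply: potential_update_mono => [j /negbTE -> //|].
by apply: le_budget; rewrite start_time_done /start_time busy_i /= (negbTE sx_ne).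
Qed.

Lemma potential_next_late b :
  prog sx = P -> r + tscale < t' ->
  potential_next s P r t' i x b <= potential s P r cur.
Proof.
move=> sxP late; rewrite potential_next_done.
case: (leqP (prog (Gmap f p sx b)) P) => g_P.
  rewrite potential_after_stay //; apply: potential_update_mono => [j /negbTE -> //|].
  by rewrite start_time_done budget_late // budget_ge0.
apply: le_trans (potential_after_advance (prog_Gmap_advance sxP g_P) s_done_pending) _.
rewrite (rho_zscaleS P r) mulrC ler_pM2l ?zscale_gt0 //.
have c_gt0 := tscale_gt0.
have decay : expR (1 - (t' - r) / tscale) <= 1.
  by rewrite -[leRHS]expR0 ler_expR subr_le0 ler_pdivlMr // mul1r; lra.
by apply: le_trans decay _; rewrite lerDl mulr_ge0 ?u_ge0 ?budget_term_ge0.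
Qed.

Lemma potential_next_early :
  prog sx = P -> t' <= r + tscale ->
  p * potential_next s P r t' i x true + (1 - p) * potential_next s P r t' i x false
    <= potential s P r cur.
Proof.
move=> sxP early; have p0 := p_gt0; have p1 := p_le1; have u0 := u_ge0.
have start_i : start_time s P cur i = (s i).1.1 by rewrite /start_time busy_i sxP eqxx.
have drop : budget r (start_time s_done P t' i) i <= budget r (start_time s P cur i) i - 1.
  by rewrite start_time_done start_i; exact: budget_complete.
have p_le_B : p <= B.
  rewrite -[leLHS]mulr1 ler_pM2l //; apply: le_trans (budget_le_sum s P r cur i).
  by have := budget_ge0 r (start_time s_done P t' i) i; lra.
have next_false : potential_next s P r t' i x false <= zscale P r * (1 + u * (B - p)).
  rewrite potential_next_done potential_after_stay; last first.
    by have := prog_Gmap p false (grad_prog sx); rewrite sxP addn0.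
  by rewrite -[X in B - X]mulr1; apply: potential_update_le drop => j /negbTE ->.
have next_true : potential_next s P r t' i x true <= zscale P r * (expR 1 + u * (B - p)).
  have e_ge1 : 1 <= expR (1 : R) by have := expR_ge1Dx (1 : R); lra.
  rewrite potential_next_done; case: (leqP (prog (Gmap f p sx true)) P) => g_P.
    rewrite potential_after_stay //; apply: le_trans (potential_update_le _ drop) _.
      by move=> j /negbTE ->.
    by rewrite ler_pM2l ?zscale_gt0 // mulr1 lerD2r.
  apply: le_trans (potential_after_advance (prog_Gmap_advance sxP g_P) s_done_pending) _.
  rewrite (rho_zscaleS P r) mulrC ler_pM2l ?zscale_gt0 //.
  have : expR (1 - (t' - r) / tscale) <= expR 1.
    rewrite ler_expR gerDl oppr_le0 divr_ge0 ?subr_ge0 ?(le_trans r_le_cur) //.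
    exact: ltW tscale_gt0.
  by move=> le_e; apply: le_trans le_e _; rewrite lerDl mulr_ge0 // subr_ge0.
(* advancing with probability [p] costs a factor [expR 1 = 1 + u], failing
   lowers [B] by [p]; the two effects cancel in expectation *)
have -> : potential s P r cur =
    p * (zscale P r * (expR 1 + u * (B - p))) + (1 - p) * (zscale P r * (1 + u * (B - p))).
  by rewrite /potential /budget_term P_lt_T /u; ring.
apply: lerD; first by rewrite ler_pM2l.
by apply: ler_wpM2l next_false; rewrite subr_ge0.
Qed.

End Completion.
End Cases.

Lemma convex_le (a b z : R) : a <= z -> b <= z -> p * a + (1 - p) * b <= z.
Proof.
move=> az bz; have p0 := p_gt0; have p1 := p_le1.
have := ler_wpM2l (ltW p0) az; have : (1 - p) * b <= (1 - p) * z.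
  by rewrite ler_wpM2l // subr_ge0.
by lra.
Qed.

Lemma potential_next_le s P (r cur t' : R) i x :
  (forall j, (s j).2 -> (prog (s j).1.2 <= P)%N) -> r <= cur -> cur <= t' ->
  p * potential_next s P r t' i x true + (1 - p) * potential_next s P r t' i x false
    <= potential s (minn P T) r cur.
Proof.
move=> pending r_cur cur_t'; case: (leqP T P) => [T_le_P | P_lt_T].
  have frozen b : potential_next s P r t' i x b = potential s T r cur.
    rewrite /potential_next /potential_after (minn_idPr T_le_P).
    by rewrite (minn_idPr (leq_trans T_le_P (leq_maxl _ _))) ltnn /potential /budget_term ltnn.
  by rewrite !frozen; apply: convex_le; apply: lexx.
have [busy|idle] := boolP (s i).2; last by apply: convex_le; apply: potential_next_idle.
have [wait|done_i] := ltP t' ((s i).1.1 + tau i).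
  by apply: convex_le; apply: potential_next_wait.
have [sxP|sx_ne] := eqVneq (prog (s i).1.2) P; last first.
  by apply: convex_le; apply: potential_next_behind.
have [early|late] := leP t' (r + tscale); first exact: potential_next_early.
by apply: convex_le; apply: potential_next_late.
Qed.

End OneStep.

Lemma zscale_inv_le (t delta : R) : (0 < T)%N -> 0 < delta ->
  t <= 24^-1 * tmin * (T%:R / 2 + ln delta) -> (zscale T t)^-1 <= delta.
Proof.
move=> T_gt0 delta_gt0 t_le; have c_gt0 := tscale_gt0; have r_gt0 := rho_gt0.
have u0 := u_ge0; have u3 := u_le3; have T1 : (1 : R) <= T%:R by rewrite ler1n.
have t_scaled : t / tscale <= T%:R / 2 + ln delta.
  by rewrite ler_pdivrMr // /tscale mulrC [tmin / 24]mulrC.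
have rho_pow : rho ^+ T.+1 <= expR (T%:R / 2).
  apply: le_trans (_ : expR (u / 23) ^+ T.+1 <= _).
    by rewrite lerXn2r ?nnegrE ?expR_ge0 ?(ltW r_gt0) //; exact: expR_ge1Dx.
  by rewrite -expRM_natl ler_expR -natr1; nra.
rewrite /zscale invf_div ler_pdivrMr ?expR_gt0 // -[X in _ <= X * _]lnK ?posrE //.
by apply: le_trans rho_pow _; rewrite -expRD ler_expR; lra.
Qed.

Section PotentialRun.
Variables (f : 'rV[R]_d -> R) (A : algorithm R n d).
Hypotheses (grad_prog : forall x, (prog (grad f x) <= (prog x).+1)%N)
  (A_valid : alg_valid A)
  (A_zero_resp : forall xi : nat -> bool, (forall k, xi k = false -> p < 1) ->
     zero_resp_run A (oracles f) xi).

Local Notation hist := (hist A (oracles f)).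
Local Notation qtime := (qtime A (oracles f)).
Local Notation query := (query A (oracles f)).
Local Notation in_S := (in_S A (oracles f)).

Definition level xi k := minn (maxprog (hist xi k).2) T.

Fixpoint reset_time xi k : R :=
  if k is k'.+1 then
    if (level xi k' < level xi k'.+1)%N then qtime xi k'.+1 else reset_time xi k'
  else 0.

Definition run_potential xi k :=
  potential (hist xi k).1 (level xi k) (reset_time xi k) (qtime xi k).

Definition query_prog_le xi k := (prog (query xi k) <= maxprog (hist xi k).2)%N.

Lemma run_invariant xi k : (forall j, (j < k)%N -> query_prog_le xi j) ->
  (forall j, ((hist xi k).1 j).2 ->
     (prog ((hist xi k).1 j).1.2 <= maxprog (hist xi k).2)%N) /\
  reset_time xi k <= qtime xi k.
Proof.
elim: k => [|k IH] zr; first by split => // j.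
have [pending reset_le] := IH (fun j j_lt => zr j (ltnW j_lt)).
split; last first.
  rewrite /=; case: ifP => _ //; exact: le_trans reset_le (qtime_le_next _ _ _ A_valid).
move=> j; rewrite histS /hist_step /= maxprog_rcons.
case: eqP => [_|_ /pending]; last by move/leq_trans; apply; rewrite leq_maxl.
rewrite /oracles /delayed_oracle; have := pending (A (hist xi k).2).1.2.
case: (_ (A (hist xi k).2).1.2) => [[st sx] []] /= pend_i.
  by case: ifP => //= _ _; rewrite leq_max pend_i.
by move=> _; rewrite leq_max; apply/orP; left; exact: zr.
Qed.

Lemma eq_reset_time xi xi' k :
  (forall j, (j < k)%N -> xi j = xi' j) -> reset_time xi k = reset_time xi' k.
Proof.
elim: k => [//|k IH] eq_xi /=.
have eq_xi' j : (j < k)%N -> xi j = xi' j by move/ltnW; exact: eq_xi.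
by rewrite /level /qtime (eq_hist _ _ eq_xi) (eq_hist _ _ eq_xi') IH.
Qed.

Lemma run_potential_upd xi k c :
  let: (s, gs) := hist xi k in
  run_potential (upd xi k c) k.+1 =
  potential_next f s (maxprog gs) (reset_time xi k) (A gs).1.1 (A gs).1.2 (A gs).2 c.
Proof.
have eq_xi j : (j < k)%N -> upd xi k c j = xi j by rewrite /upd => /ltn_eqF ->.
rewrite /run_potential [reset_time _ k.+1]/= /level /qtime !histS.
rewrite (eq_hist _ _ eq_xi) (eq_reset_time eq_xi) /upd eqxx.
by case: (hist xi k) => s gs; rewrite /hist_step /= maxprog_rcons.
Qed.

Lemma run_potential_step xi k : (forall j, (j <= k)%N -> query_prog_le xi j) ->
  p * run_potential (upd xi k true) k.+1 + (1 - p) * run_potential (upd xi k false) k.+1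
    <= run_potential xi k.
Proof.
move=> zr; have [pending reset_le] := run_invariant (fun j j_lt => zr j (ltnW j_lt)).
have := run_potential_upd xi k true; have := run_potential_upd xi k false.
have := qtime_le_next (oracles f) xi k A_valid; rewrite /run_potential /level in pending reset_le *.
case: (hist xi k) pending reset_le => s gs /= pending reset_le cur_le -> ->.
exact: potential_next_le.
Qed.

Lemma run_potential0 xi : run_potential xi 0 <= 1.
Proof.
apply: le_trans; first by apply: potential_reset.
have -> : level xi 0 = 0%N by rewrite /level /= /maxprog big_nil min0n.
by rewrite /zscale /= mul0r subr0 expR0 expr1 mul1r mulfV ?lt0r_neq0 ?rho_gt0.
Qed.

Lemma level_frozen xi k m : level xi k = T -> (k <= m)%N ->
  level xi m = T /\ reset_time xi m = reset_time xi k.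
Proof.
move=> top /subnKC <-; elim: (m - k)%N => [|j [top_j reset_j]]; first by rewrite addn0.
have top_j1 : level xi (k + j).+1 = T.
  apply/minn_idPr; apply: leq_trans (maxprog_histS _ _ _ _).
  by move: top_j; rewrite /level => /minn_idPr.
by rewrite addnS /= top_j1 top_j ltnn.
Qed.

Lemma zero_resp_ext K (b : {ffun 'I_K -> bool}) :
  bweight p b != 0 -> forall j, (j <= K)%N -> query_prog_le (ext b) j.
Proof.
move=> b_neq0 j j_le.
(* [ext b] pads with [false], which the hypothesis on [A] excludes when [p = 1]. *)
pose xi m := if (m < K)%N then ext b m else true.
have xi_zr : zero_resp_run A (oracles f) xi.
  apply: A_zero_resp => m; rewrite /xi; case: ifP => // m_lt.
  by rewrite (ext_lt _ m_lt); apply: bweight_neq0_lt1.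
have eq_xi m : (m < j)%N -> xi m = ext b m by rewrite /xi => /leq_trans ->.
by have := zero_resp_prog j xi_zr; rewrite /query_prog_le /query (eq_hist _ _ eq_xi).
Qed.

Lemma run_potential_fail K (b : {ffun 'I_K -> bool}) (t : R) :
  bweight p b != 0 ->
  ~ (forall k, (k <= K)%N -> in_S (ext b) t k -> (prog (query (ext b) k) < T)%N) ->
  zscale T t <= run_potential (ext b) K.
Proof.
move=> b_neq0 not_E.
have [k [k_le k_in k_top]] :
    exists k, [/\ (k <= K)%N, in_S (ext b) t k & (T <= prog (query (ext b) k))%N].
  apply: contra_notP not_E => none k k_le k_in; rewrite ltnNge; apply/negP => top.
  by apply: none; exists k.
have top : level (ext b) k = T.
  by apply/minn_idPr; apply: leq_trans k_top (zero_resp_ext b_neq0 k_le).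
have [top_K reset_K] := level_frozen top k_le.
have [_ reset_le] :=
  run_invariant (fun j j_lt => zero_resp_ext b_neq0 (ltnW (leq_trans j_lt k_le))).
rewrite /run_potential top_K reset_K /potential /budget_term ltnn mulr0 addr0 mulr1.
rewrite ler_pM2r ?invr_gt0 ?exprn_gt0 ?rho_gt0 // ler_expR lerD2l lerN2.
by rewrite ler_pM2r ?invr_gt0 ?tscale_gt0 //; exact: le_trans reset_le k_in.
Qed.

End PotentialRun.

End Potential.

Theorem mainTheorem13 (R : realType) (n T T' : nat) (hn : (0 < n)%N)
  (f : 'rV[R]_T' -> R) (tau : 'I_n -> R) (p : R) (A : algorithm R n T') :
  (0 < T)%N -> (T <= T')%N ->
  (forall x, differentiable f x) ->
  (forall x, (prog (grad f x) <= (prog x).+1)%N) ->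
  (forall i, 0 < tau i) ->
  (forall i j : 'I_n, (i <= j)%N -> tau i <= tau j) ->
  0 < p -> p <= 1 ->
  alg_valid A ->
  let O := fun i : 'I_n => delayed_oracle (Gmap f p) (tau i) in
  (* A is zero-respecting on every realization of the samples *)
  (forall xi : nat -> bool, (forall k, xi k = false -> p < 1) ->
     zero_resp_run A O xi) ->
  forall (delta t : R), 0 < delta -> delta <= 1 -> 0 <= t ->
  t <= 24^-1 *
       (\big[Num.min/ ((\sum_(i < n | (i <= Ordinal hn)%N) (tau i)^-1)^-1
                        * (p^-1 + (Ordinal hn)%:R + 1))]_(m < n)
          ((\sum_(i < n | (i <= m)%N) (tau i)^-1)^-1 * (p^-1 + m%:R + 1)))
       * (T%:R / 2 + ln delta) ->
  (* P(for all k in S_t, prog(x^k) < T) >= 1 - delta, expressed through the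
     decreasing events restricted to k <= K (continuity from above) *)
  forall K : nat,
    1 - delta <=
    probK p K (fun xi => forall k, (k <= K)%N -> in_S A O xi t k ->
                           (prog (query A O xi k) < T)%N).
Proof.
move=> T_gt0 _ _ grad_prog tau_gt0 tau_mono p_gt0 p_le1 A_valid O A_zero_resp
  delta t delta_gt0 _ _ t_le K.
have p_ge0 := ltW p_gt0; pose Z := run_potential T hn tau p f A.
have EZ_le1 : expect p K (Z^~ K) <= 1.
  apply: (expect_supermartingale p_ge0 p_le1 (Z := Z)) => [xi|k b b_neq0].
    exact: run_potential0.
  by apply: run_potential_step => // j j_le; exact: zero_resp_ext.
rewrite lerBlDr -lerBlDl.
apply: le_trans (probK_compl_le (Z := Z^~ K) p_ge0 p_le1 (zscale_gt0 hn tau p T t) _ _) _.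
- by move=> xi; exact: potential_ge0.
- by move=> b b_neq0; exact: run_potential_fail.
apply: le_trans (zscale_inv_le tau_gt0 p_gt0 T_gt0 delta_gt0 t_le).
by rewrite -[leRHS]mul1r ler_pM2r ?invr_gt0 ?zscale_gt0.
Qed.
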